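(* Every star-like hereditary family is finitely generated; that is, if $\mathcal{F}$ is a star-like hereditary family then there is a finite set of graphs $\mathcal{H}$ with $\mathcal{F}=\operatorname{Forb}(\mathcal{H})$.
   Context: Graphs are finite and simple. A family is hereditary if closed under isomorphism and induced subgraphs. $\operatorname{Forb}(\mathcal{H})$ is the family of graphs with no induced subgraph isomorphic to a member of $\mathcal{H}$. A set $X\subseteq V(G)$ is a crown of $G$ if every $v\in V(G)$ is adjacent either to all vertices of $X\setminus\{v\}$ or to none of them; $S\subseteq V(G)$ is a core if $V(G)\setminus S$ is a crown; $G$ is an $s$-star if it has a core of size at most $s$. A hereditary family is $s$-star-like if there exists $n_0$ such that every graph in it with at least $n_0$ vertices is an $s$-star, and star-like if it is $s$-star-like for some integer $s\ge0$. *)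

From mathcomp Require Import all_boot.
From Stdlib Require Lists.List.
Set Implicit Arguments. Unset Strict Implicit. Unset Printing Implicit Defensive.

Record graph := Graph {
  gn : nat;
  gadj : rel 'I_gn;
  gsym : symmetric gadj;
  girr : irreflexive gadj }.

Definition induced_in (H G : graph) : Prop :=
  exists f : 'I_(gn H) -> 'I_(gn G),
    injective f /\ forall i j, gadj i j = gadj (f i) (f j).

Definition isomorphic (G H : graph) : Prop :=
  exists f : 'I_(gn G) -> 'I_(gn H),
    bijective f /\ forall i j, gadj i j = gadj (f i) (f j).

Definition gfamily := graph -> Prop.

Definition hereditary (F : gfamily) : Prop :=
  (forall G H, isomorphic G H -> F G -> F H) /\
  (forall G H, induced_in H G -> F G -> F H).

Definition Forb (Hs : graph -> Prop) : gfamily :=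
  fun G => forall H, Hs H -> ~ induced_in H G.

Definition crown (G : graph) (X : {set 'I_(gn G)}) : Prop :=
  forall v : 'I_(gn G),
    (forall x, x \in X -> x != v -> gadj v x) \/
    (forall x, x \in X -> x != v -> ~~ gadj v x).

Definition gcore (G : graph) (S : {set 'I_(gn G)}) : Prop := crown (~: S).

Definition s_star (s : nat) (G : graph) : Prop :=
  exists S : {set 'I_(gn G)}, gcore S /\ #|S| <= s.

Definition s_star_like (s : nat) (F : gfamily) : Prop :=
  exists n0, forall G, F G -> n0 <= gn G -> s_star s G.

Definition star_like (F : gfamily) : Prop := exists s, s_star_like s F.

Definition finitely_generated (F : gfamily) : Prop :=
  exists Hs : seq graph, forall G, F G <-> Forb (fun H => Stdlib.Lists.List.In H Hs) G.

From mathcomp Require Import all_boot zify.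
From Stdlib Require Import ClassicalEpsilon.
Set Implicit Arguments. Unset Strict Implicit. Unset Printing Implicit Defensive.

(* A family closed under induced subgraphs is Forb of its minimal excluded
   graphs, so it suffices to bound their order.  Deleting a vertex z from a
   large minimal excluded graph M leaves a graph of F, hence an s-star; lifting
   its crown to M gives a set X, missing at most s + 1 vertices, to which every
   vertex other than z is all-or-none adjacent.  Doing this for two vertices and
   intersecting yields a core of M of size at most 2s + 2.  Listing a core first
   and the crown after it, adjacency between any two positions is read off the
   first |S| + 2 positions, so a graph with a small core has one of finitely many
   types, and of two graphs of the same type the smaller is an induced subgraph
   of the larger.  Hence two minimal excluded graphs of the same type have the
   same order. *)

Lemma induced_in_refl (G : graph) : induced_in G G.
Proof. by exists id; split=> //; apply: inj_id. Qed.

Lemma induced_in_trans (A B C : graph) :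
  induced_in A B -> induced_in B C -> induced_in A C.
Proof.
move=> [f [f_inj f_adj]] [g [g_inj g_adj]].
exists (g \o f); split; first exact: inj_comp.
by move=> i j /=; rewrite f_adj g_adj.
Qed.

Definition minimal_excluded (F : gfamily) (M : graph) : Prop :=
  ~ F M /\ forall H, induced_in H M -> gn H < gn M -> F H.

Lemma exists_minimal_excluded (F : gfamily) (G : graph) :
  ~ F G -> exists2 M, minimal_excluded F M & induced_in M G.
Proof.
have [n] := ubnP (gn G); elim: n G => // n IH G /ltnSE leGn notFG.
have [[H [HG ltHG notFH]] | noH] :=
  classic (exists H, [/\ induced_in H G, gn H < gn G & ~ F H]).
  have [M minM MH] := IH H (leq_trans ltHG leGn) notFH.
  by exists M => //; apply: induced_in_trans MH HG.
exists G; last exact: induced_in_refl.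
split=> // H HG ltHG; apply: NNPP => notFH; apply: noH; by exists H.
Qed.

Section InducedSubgraph.

Variables (G : graph) (A : {set 'I_(gn G)}).

Definition sub_adj : rel 'I_#|A| := fun i j => gadj (enum_val i) (enum_val j).

Lemma sub_adj_sym : symmetric sub_adj.
Proof. by move=> i j; apply: gsym. Qed.

Lemma sub_adj_irr : irreflexive sub_adj.
Proof. by move=> i; apply: girr. Qed.

Definition induced_subgraph : graph := Graph sub_adj_sym sub_adj_irr.

Lemma induced_subgraph_induced : induced_in induced_subgraph G.
Proof. by exists enum_val; split=> //; apply: enum_val_inj. Qed.

End InducedSubgraph.

Definition all_or_none (G : graph) (X : {set 'I_(gn G)}) (v : 'I_(gn G)) : Prop :=
  (forall x, x \in X -> x != v -> gadj v x) \/
  (forall x, x \in X -> x != v -> ~~ gadj v x).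

Lemma all_or_noneS (G : graph) (X Y : {set 'I_(gn G)}) v :
  X \subset Y -> all_or_none Y v -> all_or_none X v.
Proof.
move=> /subsetP XY [all_v | none_v]; [left | right] => x /XY;
  [exact: all_v | exact: none_v].
Qed.

Lemma crown_adj_eq (G : graph) (X : {set 'I_(gn G)}) v x y :
  crown X -> x \in X -> y \in X -> x != v -> y != v -> gadj v x = gadj v y.
Proof.
move=> /(_ v) [all_v | none_v] xX yX xv yv; first by rewrite !all_v.
by rewrite (negbTE (none_v _ xX xv)) (negbTE (none_v _ yX yv)).
Qed.

Lemma crown_adj_const (G : graph) (X : {set 'I_(gn G)}) x y x' y' :
  crown X -> x \in X -> y \in X -> x' \in X -> y' \in X ->
  x != y -> x' != y' -> gadj x y = gadj x' y'.
Proof.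
move=> crX xX yX x'X y'X xy x'y'.
have [xx' | xx'] := eqVneq x x'.
  by subst x'; rewrite (crown_adj_eq crX yX y'X) // eq_sym.
rewrite (crown_adj_eq crX yX x'X) 1?eq_sym // gsym.
by rewrite (crown_adj_eq crX xX y'X) // eq_sym.
Qed.

Section StarLikeCore.

Variables (F : gfamily) (s n0 : nat).
Hypothesis F_star : forall G, F G -> n0 <= gn G -> s_star s G.

Lemma minimal_excluded_crown_off (M : graph) (z : 'I_(gn M)) :
  minimal_excluded F M -> n0 < gn M ->
  exists2 X : {set 'I_(gn M)}, #|~: X| <= s.+1 &
    forall u, u != z -> all_or_none X u.
Proof.
move=> [_ minM] ltM.
pose A := [set~ z].
have cardA : #|A| = (gn M).-1 by rewrite cardsC1 card_ord.
have [S [coreS cardS]] : s_star s (induced_subgraph A).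
  apply: F_star; last by rewrite /= cardA; lia.
  by apply: minM (induced_subgraph_induced A) _; rewrite /= cardA; lia.
have rankK u (uA : u \in A) := enum_rankK_in uA uA.
exists [set enum_val i | i in ~: S].
  have notX_sub : ~: [set enum_val i | i in ~: S] \subset z |: [set enum_val i | i in S].
    apply/subsetP => u; rewrite in_setC in_setU1.
    have [// | uz /= notX] := eqVneq u z.
    have uA : u \in A by rewrite !inE uz.
    apply/imsetP; exists (enum_rank_in uA u); last by rewrite rankK.
    apply: contraNT notX => iS.
    by apply/imsetP; exists (enum_rank_in uA u); rewrite ?inE ?rankK.
  apply: leq_trans (subset_leq_card notX_sub) _.
  by rewrite cardsU1 (leq_add (leq_b1 _)) // (leq_trans (leq_imset_card _ _)).
move=> u uz; have uA : u \in A by rewrite !inE uz.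
set i := enum_rank_in uA u.
have sub_adj_u j : sub_adj j i = gadj (enum_val j) u by rewrite /sub_adj rankK.
case: (coreS i) => [all_i | none_i]; [left | right] => _ /imsetP [j jS ->] ju;
  (have ji : j != i by apply: contraNneq ju => ->; rewrite rankK);
  rewrite gsym -sub_adj_u sub_adj_sym; [exact: all_i | exact: none_i].
Qed.

Lemma minimal_excluded_small_core (M : graph) :
  minimal_excluded F M -> n0 < gn M -> 1 < gn M ->
  exists2 S : {set 'I_(gn M)}, gcore S & #|S| <= 2 * s.+1.
Proof.
move=> minM ltM lt1M.
pose z1 : 'I_(gn M) := Ordinal (ltnW lt1M); pose z2 : 'I_(gn M) := Ordinal lt1M.
have [X1 card1 crown1] := minimal_excluded_crown_off z1 minM ltM.
have [X2 card2 crown2] := minimal_excluded_crown_off z2 minM ltM.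
exists (~: (X1 :&: X2)); last by rewrite setCI cardsU; lia.
rewrite /gcore setCK => u.
have [-> | uz1] := eqVneq u z1.
  by apply: all_or_noneS (crown2 _ _); rewrite ?subsetIr.
by apply: all_or_noneS (crown1 _ uz1); rewrite subsetIl.
Qed.

End StarLikeCore.

(* With the core at positions below b and the crown above, a crown position
   paired with a core one can be moved to b, and two distinct crown positions
   to b and b + 1. *)
Definition core_reduce (b i j : nat) : nat * nat :=
  if i < b then (if j < b then (i, j) else (i, b))
  else if j < b then (b, j) else if i == j then (b, b) else (b, b.+1).

Lemma core_reduce_lt b i j :
  (core_reduce b i j).1 < b.+2 /\ (core_reduce b i j).2 < b.+2.
Proof.
by rewrite /core_reduce; case: (ltnP i b); case: (ltnP j b); case: (i == j) => * /=; lia.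
Qed.

Section CoreOrder.

Variables (G : graph) (S : {set 'I_(gn G)}).

Definition core_seq : seq 'I_(gn G) := enum S ++ enum (~: S).

Definition core_idx (u : 'I_(gn G)) : nat := index u core_seq.

Definition core_adj (i j : nat) : bool :=
  [exists u, exists v, [&& core_idx u == i, core_idx v == j & gadj u v]].

Lemma mem_core_seq u : u \in core_seq.
Proof. by rewrite mem_cat !mem_enum in_setC orbN. Qed.

Lemma core_seq_uniq : uniq core_seq.
Proof.
rewrite cat_uniq !enum_uniq andbT /=.
by apply/hasPn => x; rewrite !mem_enum in_setC.
Qed.

Lemma size_core_seq : size core_seq = gn G.
Proof. by rewrite size_cat -!cardE cardsC card_ord. Qed.

Lemma core_idx_lt u : core_idx u < gn G.
Proof. by rewrite -size_core_seq index_mem mem_core_seq. Qed.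

Lemma core_idx_inj : injective core_idx.
Proof. by move=> u v; apply: (index_inj u); apply: mem_core_seq. Qed.

Lemma core_idx_onto i : i < gn G -> exists u, core_idx u = i.
Proof.
move=> lti; exists (nth (Ordinal lti) core_seq i).
by rewrite /core_idx index_uniq ?size_core_seq ?core_seq_uniq.
Qed.

Lemma core_idx_in_core u : (core_idx u < #|S|) = (u \in S).
Proof.
rewrite /core_idx /core_seq index_cat mem_enum cardE.
by case: ifP => uS; rewrite ?index_mem ?mem_enum // ltnNge leq_addr.
Qed.

Lemma core_idx_in_crown u : (#|S| <= core_idx u) = (u \in ~: S).
Proof. by rewrite in_setC -core_idx_in_core leqNgt. Qed.

Lemma core_adj_idx u v : core_adj (core_idx u) (core_idx v) = gadj u v.
Proof.
apply/existsP/idP => [[u' /existsP [v' /and3P [/eqP/core_idx_inj -> /eqP/core_idx_inj ->]]] | uv] //.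
by exists u; apply/existsP; exists v; rewrite !eqxx.
Qed.

Lemma core_adjC i j : core_adj i j = core_adj j i.
Proof.
apply/existsP/existsP => [] [u /existsP [v /and3P [ui vj uv]]];
  by exists v; apply/existsP; exists u; rewrite ui vj gsym.
Qed.

Lemma core_adj_diag i : core_adj i i = false.
Proof.
apply/negbTE/existsP => -[u /existsP [v /and3P [/eqP ui /eqP vi]]].
have -> : u = v by apply: core_idx_inj; rewrite ui vi.
by rewrite girr.
Qed.

Hypothesis coreS : gcore S.

Lemma core_adj_core_crown i j :
  i < #|S| -> #|S| <= j -> j < gn G -> core_adj i j = core_adj i #|S|.
Proof.
move=> iS Sj jG.
have [x xS] := core_idx_onto (leq_ltn_trans Sj jG).
have [u ?] := core_idx_onto (ltn_trans iS (leq_ltn_trans Sj jG)); subst i.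
have [v ?] := core_idx_onto jG; subst j.
have uS : u \in S by rewrite -core_idx_in_core.
have vX : v \in ~: S by rewrite -core_idx_in_crown.
have xX : x \in ~: S by rewrite -core_idx_in_crown xS.
rewrite -xS !core_adj_idx; apply: (crown_adj_eq coreS vX xX).
  by apply: contraTneq vX => ->; rewrite in_setC uS.
by apply: contraTneq xX => ->; rewrite in_setC uS.
Qed.

Lemma core_adj_crown_crown i j :
  #|S| <= i -> #|S| <= j -> i != j -> i < gn G -> j < gn G ->
  core_adj i j = core_adj #|S| #|S|.+1.
Proof.
move=> Si Sj ij iG jG.
have [x xS] := core_idx_onto (leq_ltn_trans Si iG).
have [y yS] : exists y, core_idx y = #|S|.+1.
  by apply: core_idx_onto; move: ij => /eqP; lia.
have [u ?] := core_idx_onto iG; subst i.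
have [v ?] := core_idx_onto jG; subst j.
rewrite -yS -xS !core_adj_idx.
apply: (crown_adj_const coreS); rewrite -?core_idx_in_crown ?xS ?yS //.
- by apply: contraNneq ij => ->.
- by apply/eqP => /(congr1 core_idx); lia.
Qed.

Lemma core_adj_reduce i j : i < gn G -> j < gn G ->
  core_adj i j = core_adj (core_reduce #|S| i j).1 (core_reduce #|S| i j).2.
Proof.
move=> iG jG; rewrite /core_reduce.
case: (ltnP i #|S|) => iS; case: (ltnP j #|S|) => jS //=.
- exact: core_adj_core_crown.
- by rewrite core_adjC core_adj_core_crown // core_adjC.
- case: eqVneq => [<- | ij]; first by rewrite !core_adj_diag.
  exact: core_adj_crown_crown.
Qed.

End CoreOrder.

Definition core_type (k : nat) (G : graph) (S : {set 'I_(gn G)}) :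
    'I_k.+2 * {ffun 'I_k.+2 * 'I_k.+2 -> bool} :=
  (inord #|S|, [ffun p : 'I_k.+2 * 'I_k.+2 => core_adj S p.1 p.2]).

Lemma induced_in_core_type k (G1 G2 : graph)
    (S1 : {set 'I_(gn G1)}) (S2 : {set 'I_(gn G2)}) :
  gcore S1 -> gcore S2 -> #|S1| <= k -> #|S2| <= k ->
  core_type k S1 = core_type k S2 -> gn G1 <= gn G2 -> induced_in G1 G2.
Proof.
move=> core1 core2 S1k S2k [type_card type_adj] le12.
have card12 : #|S1| = #|S2|.
  by move/(congr1 val): type_card; rewrite /= !inordK // ltnS ltnW.
have small_adj i j : i < k.+2 -> j < k.+2 -> core_adj S1 i j = core_adj S2 i j.
  move=> ik jk.
  have := congr1 (fun c : {ffun _ -> bool} => c (inord i, inord j)) type_adj.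
  by rewrite !ffunE /= !inordK.
have adj12 i j : i < gn G1 -> j < gn G1 -> core_adj S1 i j = core_adj S2 i j.
  move=> iG jG; have iG2 := leq_trans iG le12; have jG2 := leq_trans jG le12.
  rewrite (core_adj_reduce core1) // (core_adj_reduce core2) // card12.
  by have [r1 r2] := core_reduce_lt #|S2| i j; apply: small_adj; lia.
pose f u := nth (widen_ord le12 u) (core_seq S2) (core_idx S1 u).
have idx_f u : core_idx S2 (f u) = core_idx S1 u.
  rewrite /core_idx index_uniq ?core_seq_uniq // size_core_seq.
  exact: leq_trans (core_idx_lt S1 u) le12.
exists f; split=> [u v /(congr1 (core_idx S2)) | u v].
  by rewrite !idx_f => /core_idx_inj.
by rewrite -(core_adj_idx S1) -(core_adj_idx S2) !idx_f adj12 ?core_idx_lt.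
Qed.

Lemma uniform_bound_fin (T : finType) (Q : T -> nat -> Prop) :
  (forall t N N', N <= N' -> Q t N -> Q t N') -> (forall t, exists N, Q t N) ->
  exists N, forall t, Q t N.
Proof.
move=> Q_mono Q_ex.
suff [N QN] : exists N, forall t, t \in enum T -> Q t N.
  by exists N => t; apply: QN; rewrite mem_enum.
elim: (enum T) => [|t ts [N QN]]; first by exists 0.
have [Nt Qt] := Q_ex t.
exists (maxn N Nt) => t'; rewrite in_cons => /predU1P [-> | t'ts].
  by apply: Q_mono Qt; rewrite leq_maxr.
by apply: Q_mono (QN _ t'ts); rewrite leq_maxl.
Qed.

Lemma minimal_excluded_core_bounded (F : gfamily) (k : nat) :
  exists N, forall M (S : {set 'I_(gn M)}),
    minimal_excluded F M -> gcore S -> #|S| <= k -> gn M <= N.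
Proof.
pose Q t N := forall M (S : {set 'I_(gn M)}), minimal_excluded F M -> gcore S ->
  #|S| <= k -> core_type k S = t -> gn M <= N.
suff [N QN] : exists N, forall t, Q t N.
  by exists N => M S minM coreS Sk; apply: QN.
apply: uniform_bound_fin => [t N N' NN' QtN M S minM coreS Sk tS | t].
  exact: leq_trans (QtN M S minM coreS Sk tS) NN'.
have [[M0 [S0 [minM0 coreS0 S0k tS0]]] | no_M] :=
  classic (exists M (S : {set 'I_(gn M)}),
    [/\ minimal_excluded F M, gcore S, #|S| <= k & core_type k S = t]).
  exists (gn M0) => M S [_ minM] coreS Sk tS; rewrite leqNgt; apply/negP => ltM0M.
  have M0M := induced_in_core_type coreS0 coreS S0k Sk (etrans tS0 (esym tS))
    (ltnW ltM0M).
  by case: minM0 => notFM0 _; apply: notFM0 (minM _ M0M ltM0M).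
by exists 0 => M S minM coreS Sk tS; case: no_M; exists M, S.
Qed.

Lemma star_like_minimal_excluded_bounded (F : gfamily) (s : nat) :
  s_star_like s F -> exists N, forall M, minimal_excluded F M -> gn M <= N.
Proof.
move=> [n0 F_star]; have [N core_bound] := minimal_excluded_core_bounded F (2 * s.+1).
exists (maxn N (maxn n0 1)) => M minM.
case: (ltnP n0 (gn M)) => [n0M | ]; last by rewrite !leq_max => ->; rewrite orbT.
case: (ltnP 1 (gn M)) => [M1 | ]; last by rewrite !leq_max => ->; rewrite !orbT.
have [S coreS cardS] := minimal_excluded_small_core F_star minM n0M M1.
by rewrite leq_max (core_bound M S minM coreS cardS).
Qed.

Section AdjacencyMatrix.

Variables (n : nat) (c : {ffun 'I_n * 'I_n -> bool}).

Definition mx_adj : rel 'I_n := fun i j => [&& i != j, c (i, j) & c (j, i)].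

Lemma mx_adj_sym : symmetric mx_adj.
Proof. by move=> i j; rewrite /mx_adj eq_sym (andbC (c (i, j))). Qed.

Lemma mx_adj_irr : irreflexive mx_adj.
Proof. by move=> i; rewrite /mx_adj eqxx. Qed.

Definition graph_of_mx : graph := Graph mx_adj_sym mx_adj_irr.

End AdjacencyMatrix.

Definition adj_mx (G : graph) : {ffun 'I_(gn G) * 'I_(gn G) -> bool} :=
  [ffun p => gadj p.1 p.2].

Lemma mx_adj_adj_mx (G : graph) : mx_adj (adj_mx G) =2 @gadj G.
Proof.
move=> i j; rewrite /mx_adj !ffunE /= (gsym j) andbb.
by have [-> | //] := eqVneq i j; rewrite girr.
Qed.

Lemma induced_in_graph_of_adj_mx (G : graph) :
  induced_in G (graph_of_mx (adj_mx G)) /\ induced_in (graph_of_mx (adj_mx G)) G.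
Proof.
by split; exists id; split=> [|i j] /=; rewrite ?mx_adj_adj_mx //; apply: inj_id.
Qed.

Definition graphs_upto (N : nat) : seq graph :=
  List.flat_map (fun n => List.map (@graph_of_mx n) (enum {ffun 'I_n * 'I_n -> bool}))
    (iota 0 N.+1).

Lemma In_of_mem (T : eqType) (x : T) (s : seq T) : x \in s -> List.In x s.
Proof. by elim: s => //= y s IH /predU1P [-> | /IH]; [left | right]. Qed.

Lemma In_graphs_upto (N : nat) (G : graph) :
  gn G <= N -> List.In (graph_of_mx (adj_mx G)) (graphs_upto N).
Proof.
move=> GN; apply/List.in_flat_map; exists (gn G); split.
  by apply: In_of_mem; rewrite mem_iota.
by apply/List.in_map/In_of_mem; rewrite mem_enum.
Qed.

Lemma finitely_generated_of_bounded_minimal (F : gfamily) (N : nat) :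
  (forall G H, induced_in H G -> F G -> F H) ->
  (forall M, minimal_excluded F M -> gn M <= N) -> finitely_generated F.
Proof.
move=> F_induced bound.
pose excluded H := if excluded_middle_informative (F H) then false else true.
have excludedP H : excluded H = true <-> ~ F H.
  by rewrite /excluded; case: excluded_middle_informative.
exists (List.filter excluded (graphs_upto N)) => G; split.
  by move=> FG H /List.filter_In [_ /excludedP notFH] HG; apply/notFH/(F_induced G).
move=> forbG; apply: NNPP => notFG.
have [M minM MG] := exists_minimal_excluded notFG.
have [M_Mx Mx_M] := induced_in_graph_of_adj_mx M.
apply: (forbG (graph_of_mx (adj_mx M))); last exact: induced_in_trans Mx_M MG.
apply/List.filter_In; split; first by apply/In_graphs_upto/bound.
by apply/excludedP => /(F_induced _ _ M_Mx); apply: minM.1.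
Qed.

Theorem corollary4p2 (F : gfamily) :
  hereditary F -> star_like F -> finitely_generated F.
Proof.
move=> [_ F_induced] [s /star_like_minimal_excluded_bounded [N bound]].
exact: finitely_generated_of_bounded_minimal F_induced bound.
Qed.
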